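(* Let $\mathcal{A}$ be a complete deterministic timed automaton (CTA). Let $\gamma_{r1}$ and $\gamma_{r2}$ be valid reset-clocked words of $\mathcal{A}$ and let $\xi$ be a region word. If $\gamma_{r1}$ and $\gamma_{r2}$ reach the same symbolic state of $\mathcal{A}$, then for all $\gamma_{r1}'\in\mathit{vs}_{\mathcal{A}}(\gamma_{r1},\xi)$ and $\gamma_{r2}'\in\mathit{vs}_{\mathcal{A}}(\gamma_{r2},\xi)$: (1) $resets(\gamma_{r1}')=resets(\gamma_{r2}')$; (2) $\gamma_{r1}\gamma_{r1}'$ and $\gamma_{r2}\gamma_{r2}'$ reach the same symbolic state.
   Context: Let $\Sigma$ be a finite alphabet and $\mathcal{C}=\{c_1,\dots,c_m\}$ a finite set of clocks. A clock constraint is a finite conjunction of atomic constraints $c\sim k$ ($c\in\mathcal{C}$, $k\in\mathbb{N}$, ${\sim}\in\{<,\le,=,\ge,>\}$). A clock valuation is $\nu:\mathcal{C}\to\mathbb{R}_{\ge0}$ (identified with a vector in $\mathbb{R}_{\ge0}^m$); $\nu+d$ adds $d$ to all clocks, $[\mathcal{B}\to0]\nu$ resets the clocks in $\mathcal{B}$. A timed automaton is $\mathcal{A}=(\Sigma,L,l_0,F,\mathcal{C},\Delta)$ with finite location set $L$, initial $l_0$, accepting $F\subseteq L$, transitions $\Delta\subseteq L\times\Sigma\times\Phi(\mathcal{C})\times2^{\mathcal{C}}\times L$. A run over a delay-timed word $(\sigma_1,t_1)\cdots(\sigma_n,t_n)$ is $(l_0,\nu_0)\xrightarrow{t_1,\sigma_1}\cdots\xrightarrow{t_n,\sigma_n}(l_n,\nu_n)$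 with $\nu_0\equiv0$ and transitions $(l_{i-1},\sigma_i,\phi_i,\mathcal{B}_i,l_i)\in\Delta$ such that $\nu_{i-1}+t_i$ satisfies $\phi_i$ and $\nu_i=[\mathcal{B}_i\to0](\nu_{i-1}+t_i)$. $\mathcal{A}$ is a CTA if every delay-timed word has exactly one run. The reset-clocked word of the run is $(\sigma_1,\mathbf{v}_1,\mathbf{b}_1)\cdots(\sigma_n,\mathbf{v}_n,\mathbf{b}_n)$ with $\mathbf{v}_i=\nu_{i-1}+t_i$ and $\mathbf{b}_{i,j}=\top$ iff $c_j\in\mathcal{B}_i$ (else $\bot$); $resets(\cdot)$ returns the sequence $\mathbf{b}_1,\dots,\mathbf{b}_n$ and $vw(\cdot)$ drops the reset components. A reset-clocked word is valid for $\mathcal{A}$ if it is the reset-clocked word of some run, and it then reaches the symbolic state $(l_n,\llbracket\nu_n\rrbracket)$ of that run. Regions: with $\kappa(c)$ the largest integer in guards of $\mathcal{A}$ over $c$, valuations $\nu,\nu'$ are region-equivalent iff (i) for all $c$, $\lfloor\nu(c)\rfloor=\lfloor\nu'(c)\rfloor$ or both exceed $\kappa(c)$; (ii) for all $c$ with $\nu(c)\le\kappa(c)$, $\mathrm{frac}(\nu(c))=0$ iff $\mathrm{frac}(\nu'(c))=0$; (iii) for $c_i,c_j$ with $\nu(c_i)\le\kappa(c_i),\nu(c_j)\le\kappa(c_j)$, $\mathrm{frac}(\nu(c_i))\le\mathrm{frac}(\nu(c_j))$ iff $\mathrm{frac}(\nu'(c_i))\le\mathrm{frac}(\nu'(c_j))$;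 $\llbracket\nu\rrbracket$ is the region of $\nu$ and a symbolic state is a pair (location, region). A region word is a finite sequence of pairs $(\sigma,R)$, $\sigma\in\Sigma$, $R$ a region; a clocked word $(\sigma_1,\mathbf{v}_1)\cdots(\sigma_n,\mathbf{v}_n)$ has region word $\llbracket\cdot\rrbracket=(\sigma_1,\llbracket\mathbf{v}_1\rrbracket)\cdots(\sigma_n,\llbracket\mathbf{v}_n\rrbracket)$. $\mathit{vs}_{\mathcal{A}}(\gamma_r,\xi)$ is the set of reset-clocked words $\gamma_r'$ with $\llbracket vw(\gamma_r')\rrbracket=\xi$ such that $\gamma_r\gamma_r'$ is a valid reset-clocked word of $\mathcal{A}$. *)

From Stdlib Require Import Reals.
From Stdlib Require List.
From mathcomp Require Import all_boot.
Set Implicit Arguments. Unset Strict Implicit. Unset Printing Implicit Defensive.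

Local Open Scope R_scope.

Definition valuation (m : nat) := 'I_m -> R.

Definition nonneg m (v : valuation m) : Prop := forall c, 0 <= v c.

Definition vzero m : valuation m := fun _ => 0.
Definition vdelay m (v : valuation m) (d : R) : valuation m := fun c => v c + d.
Definition vreset m (B : {set 'I_m}) (v : valuation m) : valuation m :=
  fun c => if c \in B then 0 else v c.

Inductive cmp := CLt | CLe | CEq | CGe | CGt.
Definition atomic (m : nat) := ('I_m * cmp * nat)%type.
Definition guard (m : nat) := seq (atomic m).

Definition sat_atomic m (v : valuation m) (a : atomic m) : Prop :=
  let: (c, op, k) := a in
  match op with
  | CLt => v c < INR k
  | CLe => v c <= INR k
  | CEq => v c = INR k
  | CGe => v c >= INR k
  | CGt => v c > INR k
  end.

Definition sat m (v : valuation m) (phi : guard m) : Prop :=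
  forall a, List.In a phi -> sat_atomic v a.

Definition transition (Sigma L : Type) (m : nat) :=
  (L * Sigma * guard m * {set 'I_m} * L)%type.

Record TA (Sigma L : finType) (m : nat) := {
  ta_l0 : L;
  ta_F : {set L};
  ta_delta : seq (transition Sigma L m)
}.

Definition config (L : Type) (m : nat) := (L * valuation m)%type.

(* Reset-clocked letter (sigma, v, b); b is the set of reset clocks, i.e.
   b_j = true iff c_j \in b. *)
Definition rcletter (Sigma : Type) (m : nat) := (Sigma * valuation m * {set 'I_m})%type.

Inductive run_from (Sigma L : finType) (m : nat) (A : TA Sigma L m) :
  config L m -> seq (Sigma * R) -> seq (transition Sigma L m) ->
  seq (rcletter Sigma m) -> config L m -> Prop :=
| run_nil c : run_from A c [::] [::] [::] c
| run_cons l v sigma t w phi B l' trs gr c :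
    List.In (l, sigma, phi, B, l') (ta_delta A) ->
    0 <= t ->
    sat (vdelay v t) phi ->
    run_from A (l', vreset B (vdelay v t)) w trs gr c ->
    run_from A (l, v) ((sigma, t) :: w) ((l, sigma, phi, B, l') :: trs)
             ((sigma, vdelay v t, B) :: gr) c.

Definition init_config Sigma L m (A : TA Sigma L m) : config L m :=
  (ta_l0 A, @vzero m).

Definition is_run Sigma L m (A : TA Sigma L m) (w : seq (Sigma * R))
  (trs : seq (transition Sigma L m)) : Prop :=
  exists gr c, run_from A (init_config A) w trs gr c.

Definition is_CTA Sigma L m (A : TA Sigma L m) : Prop :=
  forall w : seq (Sigma * R), (forall p, List.In p w -> 0 <= snd p) ->
    exists! trs, is_run A w trs.

Definition reaches Sigma L m (A : TA Sigma L m) (gr : seq (rcletter Sigma m))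
  (l : L) (v : valuation m) : Prop :=
  exists w trs, run_from A (init_config A) w trs gr (l, v).

Definition valid Sigma L m (A : TA Sigma L m) (gr : seq (rcletter Sigma m)) : Prop :=
  exists l v, reaches A gr l v.

Definition kappa Sigma L m (A : TA Sigma L m) (c : 'I_m) : nat :=
  foldr maxn 0%N
    [seq (let: (c', _, k) := a in if c' == c then k else 0%N)
       | a <- flatten [seq (let: (_, _, phi, _, _) := tr in phi) | tr <- ta_delta A]].

(* floor and fractional part (Stdlib: Int_part r = up r - 1 = floor r). *)
Definition rfloor (r : R) : Z := Int_part r.
Definition rfrac (r : R) : R := frac_part r.

Definition region_equiv Sigma L m (A : TA Sigma L m) (v v' : valuation m) : Prop :=
  (forall c, rfloor (v c) = rfloor (v' c) \/
             (v c > INR (kappa A c) /\ v' c > INR (kappa A c))) /\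
  (forall c, v c <= INR (kappa A c) -> (rfrac (v c) = 0 <-> rfrac (v' c) = 0)) /\
  (forall ci cj, v ci <= INR (kappa A ci) -> v cj <= INR (kappa A cj) ->
     (rfrac (v ci) <= rfrac (v cj) <-> rfrac (v' ci) <= rfrac (v' cj))).

Definition region Sigma L m (A : TA Sigma L m) (v : valuation m) : valuation m -> Prop :=
  fun v' => nonneg v' /\ region_equiv A v v'.

Definition is_region Sigma L m (A : TA Sigma L m) (Rg : valuation m -> Prop) : Prop :=
  exists v, nonneg v /\ Rg = region A v.

Definition region_word (Sigma : Type) (m : nat) := seq (Sigma * (valuation m -> Prop)).

Definition is_region_word Sigma L m (A : TA Sigma L m) (xi : region_word Sigma m) : Prop :=
  forall p, List.In p xi -> is_region A (snd p).

Definition resets Sigma m (gr : seq (rcletter Sigma m)) : seq {set 'I_m} :=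
  [seq x.2 | x <- gr].
Definition vw Sigma m (gr : seq (rcletter Sigma m)) : seq (Sigma * valuation m) :=
  [seq x.1 | x <- gr].

Definition region_of_word Sigma L m (A : TA Sigma L m)
  (cw : seq (Sigma * valuation m)) : region_word Sigma m :=
  [seq (x.1, region A x.2) | x <- cw].

Definition vs Sigma L m (A : TA Sigma L m) (gr : seq (rcletter Sigma m))
  (xi : region_word Sigma m) (gr' : seq (rcletter Sigma m)) : Prop :=
  region_of_word A (vw gr') = xi /\ valid A (gr ++ gr').

Definition same_symbolic_state Sigma L m (A : TA Sigma L m)
  (gr1 gr2 : seq (rcletter Sigma m)) : Prop :=
  exists l v1 v2, reaches A gr1 l v1 /\ reaches A gr2 l v2 /\
                  region A v1 = region A v2.

From Pilot Require Import Defs.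
From mathcomp Require Import all_boot.
From Stdlib Require Import Reals Lra Lia FunctionalExtensionality PropExtensionality.

(* A CTA is deterministic: from a reachable configuration, a letter and a delay
   enable at most one transition.  Guard constants never exceed κ, so valuations
   with the same region satisfy the same guards, and resetting clocks preserves
   equality of regions.  Hence two reachable configurations with the same
   location and region, reading delayed valuations with the same regions, fire
   the same transitions: they reset the same clocks and end again in the same
   location and region.  Applied from the initial configuration to γ_ri itself,
   the same argument shows that the run of γ_ri γ_ri' passes through the
   symbolic state reached by γ_ri. *)

Set Implicit Arguments.
Unset Strict Implicit.
Local Open Scope R_scope.

Lemma rfloor_spec r : IZR (rfloor r) <= r < IZR (rfloor r) + 1.
Proof. by rewrite /rfloor; case: (base_Int_part r) => ? ?; split; lra. Qed.

Lemma rfloor_unique (n : Z) r : IZR n <= r < IZR n + 1 -> rfloor r = n.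
Proof. by move=> [? ?]; rewrite /rfloor; symmetry; apply: Int_part_spec; lra. Qed.

Lemma rfloor_INR k : rfloor (INR k) = Z.of_nat k.
Proof. exact: Int_part_INR. Qed.

Lemma rfloor_INR_cell k r : INR k <= r < INR k + 1 -> rfloor r = Z.of_nat k.
Proof. by rewrite INR_IZR_INZ; apply: rfloor_unique. Qed.

Lemma rfrac_ge0 r : 0 <= rfrac r.
Proof. by rewrite /rfrac; case: (base_fp r) => ? _; lra. Qed.

Lemma rfrac0 : rfrac 0 = 0.
Proof. exact: fp_R0. Qed.

Lemma rfrac_eq0 r : rfrac r = 0 <-> r = IZR (rfloor r).
Proof. by rewrite /rfrac /frac_part /rfloor; split; lra. Qed.

Lemma rfrac_neq0_cell r :
  rfrac r <> 0 -> IZR (rfloor r) < r < IZR (rfloor r) + 1.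
Proof.
move=> frac_r; have [lo hi] := rfloor_spec r.
by split=> //; case: (Rle_lt_or_eq_dec _ _ lo) => // /esym /rfrac_eq0.
Qed.

Lemma open_cell_cmp_IZR (n z : Z) r :
  IZR n < r < IZR n + 1 -> (r < IZR z <-> (n < z)%Z) /\ r <> IZR z.
Proof.
move=> [lo hi]; split; [split|].
- by move=> lt_rz; apply: lt_IZR; lra.
- move=> lt_nz; have : IZR (n + 1) <= IZR z by apply: IZR_le; lia.
  by rewrite plus_IZR; lra.
- move=> eq_rz; have : (n < z)%Z by apply: lt_IZR; lra.
  have : (z < n + 1)%Z by apply: lt_IZR; rewrite plus_IZR; lra.
  lia.
Qed.

Lemma same_cell_cmp_IZR X Y :
  rfloor X = rfloor Y -> (rfrac X = 0 <-> rfrac Y = 0) ->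
  forall z : Z, (X < IZR z <-> Y < IZR z) /\ (X = IZR z <-> Y = IZR z).
Proof.
move=> eq_floor eq_frac0 z.
case: (Req_dec (rfrac X) 0) => [X0 | Xn0].
  have /rfrac_eq0 eqY := proj1 eq_frac0 X0; move/rfrac_eq0: X0 => eqX.
  by have -> : X = Y by rewrite eqX eqY eq_floor.
have Yn0 : rfrac Y <> 0 by move/eq_frac0.
have := open_cell_cmp_IZR z (rfrac_neq0_cell Xn0).
have := open_cell_cmp_IZR z (rfrac_neq0_cell Yn0).
rewrite eq_floor => -[cmpY neY] [cmpX neX].
by rewrite cmpX cmpY; split; [|split=> eq; [case: neX | case: neY]].
Qed.

Lemma sat_atomic_transfer m (x y : valuation m) c op k :
  (x c < INR k <-> y c < INR k) -> (x c = INR k <-> y c = INR k) ->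
  sat_atomic x (c, op, k) -> sat_atomic y (c, op, k).
Proof.
move=> [lt_xy lt_yx] [eq_xy eq_yx].
have : (x c < INR k /\ y c < INR k) \/ (x c = INR k /\ y c = INR k) \/
       (x c > INR k /\ y c > INR k).
  case: (Rtotal_order (x c) (INR k)) => [lt_x | [eq_x | gt_x]].
  - by left; split=> //; apply: lt_xy.
  - by right; left; split=> //; apply: eq_xy.
  right; right; split=> //.
  case: (Rtotal_order (y c) (INR k)) => [/lt_yx | [/eq_yx | //]]; lra.
by case: op => /=; lra.
Qed.

Lemma In_foldr_maxn (T : Type) (f : T -> nat) a s :
  List.In a s -> (f a <= foldr maxn 0 (map f s))%nat.
Proof.
elim: s => [//|b s IH] /= [-> | /IH le_fa]; first exact: leq_maxl.
exact: leq_trans le_fa (leq_maxr _ _).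
Qed.

Lemma In_flatten_map (T U : Type) (g : T -> seq U) a x s :
  List.In x s -> List.In a (g x) -> List.In a (flatten (map g s)).
Proof.
elim: s => [//|y s IH] /= [-> | /IH in_s] in_g; apply/List.in_app_iff; tauto.
Qed.

Section Regions.

Variables (Sigma L : finType) (m : nat) (A : TA Sigma L m).
Implicit Types (x y z : valuation m) (c : 'I_m).

Lemma region_equiv_refl x : region_equiv A x x.
Proof. by split; [left | split]. Qed.

Lemma region_equiv_cmp_IZR x y c :
  region_equiv A x y -> x c <= INR (kappa A c) ->
  forall z : Z, (x c < IZR z <-> y c < IZR z) /\ (x c = IZR z <-> y c = IZR z).
Proof.
move=> [floor_xy [frac_xy _]] le_x; apply: same_cell_cmp_IZR; last exact: frac_xy.
by case: (floor_xy c) => // -[? _]; lra.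
Qed.

Lemma region_equiv_le_kappa x y c :
  region_equiv A x y -> x c <= INR (kappa A c) -> y c <= INR (kappa A c).
Proof.
move=> xy le_x; have := region_equiv_cmp_IZR xy le_x (Z.of_nat (kappa A c)).
rewrite -INR_IZR_INZ => -[[lt_xy _] [eq_xy _]].
by case: (Rle_lt_or_eq_dec _ _ le_x) => [/lt_xy | /eq_xy]; lra.
Qed.

Lemma region_equiv_cmp_const x y c k :
  region_equiv A x y -> region_equiv A y x -> (k <= kappa A c)%nat ->
  (x c < INR k <-> y c < INR k) /\ (x c = INR k <-> y c = INR k).
Proof.
move=> xy yx /leP /le_INR le_k; rewrite INR_IZR_INZ.
case: (Rle_or_lt (x c) (INR (kappa A c))) => [le_x | gt_x].
  exact: region_equiv_cmp_IZR.
case: (Rle_or_lt (y c) (INR (kappa A c))) => [le_y | gt_y].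
  by have [? ?] := region_equiv_cmp_IZR yx le_y (Z.of_nat k); tauto.
by rewrite -INR_IZR_INZ; split; split=> ?; lra.
Qed.

Lemma guard_const_le_kappa l s phi B l' c op k :
  List.In (l, s, phi, B, l') (ta_delta A) -> List.In (c, op, k) phi ->
  (k <= kappa A c)%nat.
Proof.
move=> in_delta in_phi; rewrite /kappa.
set f := fun a : atomic m => let: (c', _, k') := a in if c' == c then k' else 0%nat.
have -> : k = f (c, op, k) by rewrite /f eqxx.
by apply: In_foldr_maxn; apply: In_flatten_map in_delta in_phi.
Qed.

Lemma guard_sat_region_equiv l s phi B l' x y :
  List.In (l, s, phi, B, l') (ta_delta A) ->
  region_equiv A x y -> region_equiv A y x -> sat x phi -> sat y phi.
Proof.
move=> in_delta xy yx sat_x [[c op] k] in_phi.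
have [lt_xy eq_xy] := region_equiv_cmp_const xy yx (guard_const_le_kappa in_delta in_phi).
exact: sat_atomic_transfer lt_xy eq_xy (sat_x _ in_phi).
Qed.

(* [region_equiv] is not transitive: it relates a clock value in (κ, κ+1) both
   to κ and to values beyond κ+1.  Transitivity through [y] needs in addition
   that [x c] lies in (κ, κ+1) whenever [y c] does. *)
Definition above_kappa_cell_incl x y := forall c,
  INR (kappa A c) < x c -> INR (kappa A c) < y c ->
  y c < INR (kappa A c) + 1 -> x c < INR (kappa A c) + 1.

Lemma region_equiv_trans x y z :
  region_equiv A x y -> region_equiv A y z -> above_kappa_cell_incl x y ->
  region_equiv A x z.
Proof.
move=> xy yz incl; have [floor_xy [frac_xy ord_xy]] := xy.
have [floor_yz [frac_yz ord_yz]] := yz.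
split; [move=> c | split].
- case: (Rle_or_lt (x c) (INR (kappa A c))) => [le_x | gt_x].
    have le_y := region_equiv_le_kappa xy le_x.
    case: (floor_xy c) => [->|[? _]]; last lra.
    by case: (floor_yz c) => [->|[? _]]; [left | lra].
  case: (Rle_or_lt (z c) (INR (kappa A c))) => [le_z | gt_z]; last by right.
  have fl_yz : rfloor (y c) = rfloor (z c) by case: (floor_yz c) => // -[_ ?]; lra.
  case: (floor_xy c) => [->|[_ gt_y]]; [by left | left].
  have lt_y : y c < INR (kappa A c) + 1.
    have [_ hi_y] := rfloor_spec (y c); have [lo_z _] := rfloor_spec (z c).
    by rewrite fl_yz in hi_y; lra.
  have lt_x := incl c gt_x gt_y lt_y.
  by rewrite -fl_yz !(@rfloor_INR_cell (kappa A c)) //; split; lra.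
- move=> c le_x; rewrite (frac_xy c le_x).
  exact/frac_yz/(region_equiv_le_kappa xy).
- move=> ci cj le_i le_j; rewrite (ord_xy ci cj le_i le_j).
  by apply: ord_yz; apply: region_equiv_le_kappa xy _.
Qed.

Definition region_similar x y :=
  [/\ region_equiv A x y, region_equiv A y x,
      above_kappa_cell_incl x y & above_kappa_cell_incl y x].

Lemma region_similar_region_eq x y : region_similar x y -> region A x = region A y.
Proof.
case=> xy yx incl_xy incl_yx; apply: functional_extensionality => z.
apply: propositional_extensionality.
by split=> -[nonneg_z ez]; split=> //; apply: region_equiv_trans ez _.
Qed.

Lemma region_eq_above_kappa_cell_incl x y :
  Defs.nonneg x -> region A x = region A y -> above_kappa_cell_incl y x.
Proof.
move=> nonneg_x exy c gt_y gt_x lt_x.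
(* [x] with clock [c] moved down to κ stays in the region of [x], which pins
   [y c] to the cell (κ, κ+1). *)
pose z c' := if c' == c then INR (kappa A c) else x c'.
have xz : region A x z.
  split; first by move=> c'; rewrite /z; case: eqP => _; [exact: pos_INR | exact: nonneg_x].
  split; [move=> c' | split].
  - rewrite /z; case: eqP => [->|_]; [left | by left].
    by rewrite rfloor_INR; apply: rfloor_INR_cell; lra.
  - by move=> c' le_x; rewrite /z; case: eqP => [eq_c|_]; [subst c'; lra | tauto].
  - move=> ci cj le_i le_j; rewrite /z.
    by case: eqP => [?|_]; [subst; lra|]; case: eqP => [?|_]; [subst; lra | tauto].
rewrite exy in xz; case: xz => _ [floor_yz _].
case: (floor_yz c) => [|[_]]; rewrite /z eqxx; last lra.
rewrite rfloor_INR => fl_y; have [_ hi] := rfloor_spec (y c).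
by rewrite fl_y -INR_IZR_INZ in hi.
Qed.

Lemma region_eq_similar x y :
  Defs.nonneg x -> Defs.nonneg y -> region A x = region A y -> region_similar x y.
Proof.
move=> nonneg_x nonneg_y exy.
have self_mem v : Defs.nonneg v -> region A v v by split=> //; apply: region_equiv_refl.
split; [| | exact: region_eq_above_kappa_cell_incl (esym exy)
            | exact: region_eq_above_kappa_cell_incl exy].
- by have [] : region A x y by rewrite exy; apply: self_mem.
- by have [] : region A y x by rewrite -exy; apply: self_mem.
Qed.

Lemma region_equiv_reset B x y :
  region_equiv A x y -> region_equiv A (vreset B x) (vreset B y).
Proof.
move=> [floor_xy [frac_xy ord_xy]]; rewrite /vreset; split; [|split].
- by move=> c; case: (c \in B); [left | apply: floor_xy].
- by move=> c; case: (c \in B); [tauto | apply: frac_xy].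
- move=> ci cj.
  have := rfrac_ge0 (x ci); have := rfrac_ge0 (y ci).
  have := rfrac_ge0 (x cj); have := rfrac_ge0 (y cj).
  case: (ci \in B); case: (cj \in B); rewrite ?rfrac0.
  + by move=> *; split=> _; lra.
  + by move=> *; split=> _; lra.
  + move=> ? ? ? ? le_i _; have [xy0 yx0] := frac_xy ci le_i.
    by split=> ?; [rewrite xy0 | rewrite yx0]; lra.
  + by move=> ? ? ? ?; apply: ord_xy.
Qed.

Lemma above_kappa_cell_incl_reset B x y :
  above_kappa_cell_incl x y -> above_kappa_cell_incl (vreset B x) (vreset B y).
Proof.
move=> incl c; rewrite /vreset; have := pos_INR (kappa A c).
by case: (c \in B) => [? ?|_]; [lra | apply: incl].
Qed.

Lemma region_eq_reset B x y :
  Defs.nonneg x -> Defs.nonneg y -> region A x = region A y ->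
  region A (vreset B x) = region A (vreset B y).
Proof.
move=> nonneg_x nonneg_y /(region_eq_similar nonneg_x nonneg_y) [xy yx incl_xy incl_yx].
by apply: region_similar_region_eq; split;
  apply: region_equiv_reset || apply: above_kappa_cell_incl_reset.
Qed.

End Regions.

Lemma vdelay_nonneg m (v : valuation m) t :
  Defs.nonneg v -> 0 <= t -> Defs.nonneg (vdelay v t).
Proof. by move=> nonneg_v t_ge0 c; have := nonneg_v c; rewrite /vdelay; lra. Qed.

Lemma vreset_nonneg m B (v : valuation m) :
  Defs.nonneg v -> Defs.nonneg (vreset B v).
Proof. by move=> nonneg_v c; rewrite /vreset; case: (c \in B) => //; lra. Qed.

Section Runs.

Variables (Sigma L : finType) (m : nat) (A : TA Sigma L m).

Definition reachable (c : config L m) :=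
  exists w trs gr, run_from A (init_config A) w trs gr c.

Lemma run_from_cat c w1 trs1 gr1 c' w2 trs2 gr2 c'' :
  run_from A c w1 trs1 gr1 c' -> run_from A c' w2 trs2 gr2 c'' ->
  run_from A c (w1 ++ w2) (trs1 ++ trs2) (gr1 ++ gr2) c''.
Proof.
elim=> // l v s t w phi B l' trs gr c1 in_delta t_ge0 sat_phi _ IH /IH run.
exact: run_cons.
Qed.

Lemma run_from_split gr1 gr2 c w trs c'' :
  run_from A c w trs (gr1 ++ gr2) c'' ->
  exists w1 w2 trs1 trs2 c',
    run_from A c w1 trs1 gr1 c' /\ run_from A c' w2 trs2 gr2 c''.
Proof.
elim: gr1 c w trs => [|a gr1 IH] c w trs run.
  by exists [::], w, [::], trs, c; split=> //; constructor.
inversion run as [|l v s t w' phi B l' trs' gr' ? in_delta t_ge0 sat_phi run']; subst.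
have [w1 [w2 [trs1 [trs2 [c' [run1 run2]]]]]] := IH _ _ _ run'.
exists ((s, t) :: w1), w2, ((l, s, phi, B, l') :: trs1), trs2, c'.
by split=> //; apply: run_cons.
Qed.

Lemma run_from_delays_ge0 c w trs gr c' :
  run_from A c w trs gr c' -> forall p, List.In p w -> 0 <= p.2.
Proof.
by elim=> {c w trs gr c'} // l v s t w phi B l' trs gr c _ t_ge0 _ _ IH p [<-|/IH].
Qed.

Lemma run_from_nonneg c w trs gr c' :
  run_from A c w trs gr c' -> Defs.nonneg c.2 -> Defs.nonneg c'.2.
Proof.
elim=> {c w trs gr c'} // l v s t w phi B l' trs gr c _ t_ge0 _ _ IH nonneg_v.
exact/IH/vreset_nonneg/vdelay_nonneg.
Qed.

Lemma reachable_init : reachable (init_config A).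
Proof. by exists [::], [::], [::]; constructor. Qed.

Lemma reachable_nonneg c : reachable c -> Defs.nonneg c.2.
Proof. by case=> [w [trs [gr /run_from_nonneg]]]; apply=> c0 /=; rewrite /vzero; lra. Qed.

Lemma reachable_step l v s t phi B l' :
  reachable (l, v) -> List.In (l, s, phi, B, l') (ta_delta A) -> 0 <= t ->
  sat (vdelay v t) phi -> reachable (l', vreset B (vdelay v t)).
Proof.
move=> [w [trs [gr run]]] in_delta t_ge0 sat_phi.
exists (w ++ [:: (s, t)]), (trs ++ [:: (l, s, phi, B, l')]), (gr ++ [:: (s, vdelay v t, B)]).
by apply: run_from_cat run _; apply: run_cons => //; constructor.
Qed.

Hypothesis cta : is_CTA A.

Lemma cta_transition_unique l v s t phi1 B1 l1 phi2 B2 l2 :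
  reachable (l, v) ->
  List.In (l, s, phi1, B1, l1) (ta_delta A) -> List.In (l, s, phi2, B2, l2) (ta_delta A) ->
  0 <= t -> sat (vdelay v t) phi1 -> sat (vdelay v t) phi2 ->
  (l, s, phi1, B1, l1) = (l, s, phi2, B2, l2).
Proof.
move=> [w [trs [gr run]]] in_delta1 in_delta2 t_ge0 sat1 sat2.
have delays_ge0 p : List.In p (w ++ [:: (s, t)]) -> 0 <= p.2.
  by case/List.in_app_iff => [/(run_from_delays_ge0 run) | [<-|]].
have [trs' [_ uniq_run]] := cta delays_ge0.
have run_last phi B l' : List.In (l, s, phi, B, l') (ta_delta A) ->
    sat (vdelay v t) phi -> trs' = rcons trs (l, s, phi, B, l').
  move=> in_delta sat_phi; apply: uniq_run; rewrite -cats1.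
  by exists (gr ++ [:: (s, vdelay v t, B)]), (l', vreset B (vdelay v t));
    apply: run_from_cat run _; apply: run_cons => //; constructor.
have := run_last _ _ _ in_delta2 sat2; rewrite (run_last _ _ _ in_delta1 sat1).
by move/rcons_inj/(congr1 snd).
Qed.

Lemma cta_step_region l v1 v2 s t1 t2 phi1 B1 l1 phi2 B2 l2 :
  reachable (l, v1) -> reachable (l, v2) ->
  List.In (l, s, phi1, B1, l1) (ta_delta A) -> List.In (l, s, phi2, B2, l2) (ta_delta A) ->
  0 <= t1 -> 0 <= t2 -> sat (vdelay v1 t1) phi1 -> sat (vdelay v2 t2) phi2 ->
  region A (vdelay v1 t1) = region A (vdelay v2 t2) ->
  [/\ B1 = B2, l1 = l2 &
      region A (vreset B1 (vdelay v1 t1)) = region A (vreset B2 (vdelay v2 t2))].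
Proof.
move=> reach1 reach2 in_delta1 in_delta2 t1_ge0 t2_ge0 sat1 sat2 eq_region.
have nonneg1 := vdelay_nonneg (reachable_nonneg reach1) t1_ge0.
have nonneg2 := vdelay_nonneg (reachable_nonneg reach2) t2_ge0.
have [xy yx _ _] := region_eq_similar nonneg1 nonneg2 eq_region.
have sat12 := guard_sat_region_equiv in_delta1 xy yx sat1.
case: (cta_transition_unique reach2 in_delta1 in_delta2 t2_ge0 sat12 sat2) => _ <- <-.
by split=> //; apply: region_eq_reset.
Qed.

Lemma run_from_region_word c1 w1 trs1 gr1 c1' c2 w2 trs2 gr2 c2' :
  run_from A c1 w1 trs1 gr1 c1' -> run_from A c2 w2 trs2 gr2 c2' ->
  reachable c1 -> reachable c2 -> c1.1 = c2.1 -> region A c1.2 = region A c2.2 ->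
  region_of_word A (vw gr1) = region_of_word A (vw gr2) ->
  [/\ resets gr1 = resets gr2, c1'.1 = c2'.1 & region A c1'.2 = region A c2'.2].
Proof.
move=> run1; elim: run1 c2 w2 trs2 gr2 c2' => {c1 w1 trs1 gr1 c1'}
  [c1 | l v1 s t1 w1 phi1 B1 l1 trs1 gr1 c1' in_delta1 t1_ge0 sat1 _ IH]
  c2 w2 trs2 gr2 c2'.
  by case=> [c _ _ eq_l eq_region _ | *]; [split | discriminate].
case=> [c _ _ _ _ eq_word | l2 v2 s2 t2 w2' phi2 B2 l2' trs2' gr2' c2'']; first discriminate.
move=> in_delta2 t2_ge0 sat2 run2 reach1 reach2 /= eq_l _ [eq_s eq_delay eq_word].
subst l2 s2.
have [eq_B eq_l' eq_reset] :=
  cta_step_region reach1 reach2 in_delta1 in_delta2 t1_ge0 t2_ge0 sat1 sat2 eq_delay.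
subst B2 l2'.
by have [-> ? ?] := IH _ _ _ _ _ run2 (reachable_step reach1 in_delta1 t1_ge0 sat1)
  (reachable_step reach2 in_delta2 t2_ge0 sat2) erefl eq_reset eq_word.
Qed.

End Runs.

Unset Implicit Arguments.

Theorem lemma3p6 (Sigma L : finType) (m : nat) (A : TA Sigma L m)
  (gr1 gr2 : seq (rcletter Sigma m)) (xi : region_word Sigma m) :
  is_CTA A -> valid A gr1 -> valid A gr2 -> is_region_word A xi ->
  same_symbolic_state A gr1 gr2 ->
  forall gr1' gr2', vs A gr1 xi gr1' -> vs A gr2 xi gr2' ->
    resets gr1' = resets gr2' /\ same_symbolic_state A (gr1 ++ gr1') (gr2 ++ gr2').
Proof.
move=> cta _ _ _ [l [v1 [v2 [[wa [ta run_a]] [[wb [tb run_b]] eq_region]]]]]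
  gr1' gr2' [word1 [l1 [u1 [wc [tc run_c]]]]] [word2 [l2 [u2 [wd [td run_d]]]]].
have [w1 [w1' [t1 [t1' [c1 [run1 run1']]]]]] := run_from_split run_c.
have [w2 [w2' [t2 [t2' [c2 [run2 run2']]]]]] := run_from_split run_d.
have init := @reachable_init _ _ _ A.
have [_ eq_l1 eq_region1] :=
  run_from_region_word cta run1 run_a init init erefl erefl erefl.
have [_ eq_l2 eq_region2] :=
  run_from_region_word cta run2 run_b init init erefl erefl erefl.
have reach1 : reachable A c1 by exists w1, t1, gr1.
have reach2 : reachable A c2 by exists w2, t2, gr2.
have [eq_resets /= eq_l eq_u] := run_from_region_word cta run1' run2' reach1 reach2
  (etrans eq_l1 (esym eq_l2)) (etrans eq_region1 (etrans eq_region (esym eq_region2)))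
  (etrans word1 (esym word2)).
subst l2; split=> //.
by exists l1, u1, u2; split; [exists wc, tc | split; [exists wd, td |]].
Qed.
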